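(* Let $Z=(Z_i)_{i=1}^n$ be a stationary ergodic Markov chain on a finite state space $\mathcal S$ with equilibrium distribution $\pi$, and let $\pi_{\min}:=\min_{x\in\mathcal S}\pi_x$. Then $$\Psi(Z)\le\Bigl(\log_2\frac1{\pi_{\min}}+3\Bigr)t_{\mathrm{mix}}.$$
   Context: $\psi(V\mid W):=\sup\bigl|\frac{\mathbb P(A\cap B)-\mathbb P(A)\mathbb P(B)}{\mathbb P(A)\mathbb P(B)}\bigr|$ over $A\in\sigma(V),B\in\sigma(W)$ with positive probability; $\Psi(Z):=\min\{j\ge1:\psi(Z_{i+j}\mid Z_i)\le1/4\text{ for all }i\in\{1,\dots,n-j\}\}$. Total variation distance $d_{TV}(\mu,\nu):=\max_{A\subseteq\mathcal S}|\mu(A)-\nu(A)|$; $d(t):=\sup_{i\in\mathcal S}d_{TV}(\mathbb P(Z_t=\cdot\mid Z_0=i),\pi)$ (for the chain with the given transition matrix); $t_{\mathrm{mix}}:=\min\{t\ge1:d(t)\le1/4\}$. *)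

From HB Require Import structures.
From mathcomp Require Import all_boot all_order all_algebra.
From mathcomp Require Import reals exp zify.
Set Implicit Arguments. Unset Strict Implicit. Unset Printing Implicit Defensive.
Import Order.TTheory GRing.Theory Num.Theory.
Local Open Scope ring_scope.

Section MC.
Variables (R : realType) (S : finType).
Variables (K : S -> S -> R) (pi : S -> R).

Definition stochastic := (forall x y, 0 <= K x y) /\ (forall x, \sum_y K x y = 1).
Definition distribution := (forall x, 0 <= pi x) /\ \sum_x pi x = 1.

Fixpoint kpow (t : nat) : S -> S -> R :=
  match t with
  | 0 => fun x y => if x == y then 1 else 0
  | t'.+1 => fun x y => \sum_z kpow t' x z * K z y
  end.

Definition stationary_dist := distribution /\ forall y, \sum_x pi x * K x y = pi y.

Definition irreducible := forall x y, exists t, 0 < kpow t x y.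
Definition aperiodic := forall x (d : nat),
  (forall t, (0 < t)%N -> 0 < kpow t x x -> (d %| t)%N) -> d = 1%N.
Definition ergodic := irreducible /\ aperiodic.

Definition pi_min : R := \big[Num.min/1]_x pi x.
(* (min with 1 is harmless since pi is a distribution: every pi x <= 1) *)

Variable N : nat.
Definition path := {ffun 'I_N.+1 -> S}.
Definition path_prob (w : path) : R :=
  pi (w ord0) * \prod_(i < N) K (w (inord i)) (w (inord i.+1)).
Definition Pr (E : {set path}) : R := \sum_(w in E) path_prob w.
(* the event {Z_i \in A}; these are exactly the events of sigma(Z_i) *)
Definition ev (i : 'I_N.+1) (A : {set S}) : {set path} := [set w : path | w i \in A].

Definition psi (k i : 'I_N.+1) : R :=
  \big[Num.max/0]_(A : {set S})
   \big[Num.max/0]_(B : {set S} | (0 < Pr (ev k A)) && (0 < Pr (ev i B)))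
     `| (Pr (ev k A :&: ev i B) - Pr (ev k A) * Pr (ev i B))
          / (Pr (ev k A) * Pr (ev i B)) |.

Definition Psi_ok (j : nat) : bool :=
  (0 < j)%N && [forall i : 'I_N.+1, forall k : 'I_N.+1,
                 (val k == (val i + j)%N) ==> (psi k i <= 4^-1)].

Lemma Psi_ex : exists j, Psi_ok j.
Proof.
exists N.+2; rewrite /Psi_ok /=; apply/forallP => i; apply/forallP => k.
apply/implyP => /eqP Hk; have := ltn_ord k; rewrite Hk.
by move=> H; exfalso; move: H; rewrite ltnNge /=; apply/negP; rewrite negbK; lia.
Qed.

Definition Psi : nat := ex_minn Psi_ex.

Definition dTV (mu nu : S -> R) : R :=
  \big[Num.max/0]_(A : {set S}) `| \sum_(y in A) mu y - \sum_(y in A) nu y |.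
Definition dist (t : nat) : R := \big[Num.max/0]_(x : S) dTV (kpow t x) pi.
Definition is_tmix (t : nat) : Prop :=
  (1 <= t)%N /\ dist t <= 4^-1 /\ forall s, (1 <= s)%N -> (s < t)%N -> ~ (dist s <= 4^-1).

End MC.

From HB Require Import structures.
From mathcomp Require Import all_boot all_order all_algebra.
From mathcomp Require Import reals exp.
From mathcomp Require Import zify ring lra.
(* Summing over paths gives P(Z_(i+j) \in A, Z_i \in B) = \sum_(x in B) pi x K^j(x, A),
   so psi(Z_(i+j) | Z_i) <= max_(x, A) |K^j(x, A) - pi(A)| / pi_min.  The
   oscillation delta(j) = max_(x, x', A) (K^j(x, A) - K^j(x', A)) is
   submultiplicative and delta(t_mix) <= 1/2, hence delta(l t_mix) <= 2^-l
   <= pi_min / 4 as soon as 2^l >= 4 / pi_min; the least such l is at most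
   log2 (1 / pi_min) + 3. *)

Set Implicit Arguments. Unset Strict Implicit. Unset Printing Implicit Defensive.
Import Order.TTheory GRing.Theory Num.Theory.
Local Open Scope ring_scope.

Section PathSums.
Variables (R : realType) (S : finType).

Definition ffun_snoc n (u : {ffun 'I_n -> S}) (y : S) : {ffun 'I_n.+1 -> S} :=
  [ffun i => if unlift ord_max i is Some j then u j else y].

Lemma ffun_snoc_last n (u : {ffun 'I_n -> S}) y : ffun_snoc u y ord_max = y.
Proof. by rewrite ffunE unlift_none. Qed.

Lemma ffun_snoc_inord n (u : {ffun 'I_n.+1 -> S}) y k :
  (k < n.+1)%N -> ffun_snoc u y (inord k) = u (inord k).
Proof.
move=> lt_kn; have lt_kn1 := ltn_trans lt_kn (ltnSn _).
rewrite ffunE; case: unliftP => [j|] /(congr1 val) /=; rewrite inordK //.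
  by rewrite /bump leqNgt ltn_ord add0n => ->; rewrite inord_val.
by move=> def_k; move: lt_kn; rewrite def_k ltnn.
Qed.

Lemma ffun_snoc_inord_last n (u : {ffun 'I_n -> S}) y : ffun_snoc u y (inord n) = y.
Proof.
rewrite -[X in ffun_snoc u y X](_ : ord_max = _) ?ffun_snoc_last //.
by apply/val_inj; rewrite /= inordK.
Qed.

Lemma sum_ffun_snoc n (F : {ffun 'I_n.+1 -> S} -> R) :
  \sum_w F w = \sum_(u : {ffun 'I_n -> S}) \sum_(y : S) F (ffun_snoc u y).
Proof.
rewrite pair_big /=.
rewrite (reindex (fun p : {ffun 'I_n -> S} * S => ffun_snoc p.1 p.2)) //.
exists (fun w : {ffun 'I_n.+1 -> S} => ([ffun j : 'I_n => w (lift ord_max j)], w ord_max)).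
- move=> [u y] _ /=; congr pair; last exact: ffun_snoc_last.
  by apply/ffunP => j; rewrite !ffunE liftK.
- move=> w _ /=; apply/ffunP => i; rewrite ffunE.
  by case: unliftP => [j ->|->]; rewrite ?ffunE.
Qed.

(* Generalises [path_prob] to time-dependent kernels that need not be stochastic. *)
Definition path_weight n (v : S -> R) (M : nat -> S -> S -> R) (w : {ffun 'I_n.+1 -> S}) :=
  v (w ord0) * \prod_(i < n) M i (w (inord i)) (w (inord i.+1)).

Fixpoint propagate n (v : S -> R) (M : nat -> S -> S -> R) : S -> R :=
  match n with 0 => v | n'.+1 => fun y => \sum_x propagate n' v M x * M n' x y end.

Lemma sum_path_weight n v M (f : S -> R) :
  \sum_(w : {ffun 'I_n.+1 -> S}) path_weight v M w * f (w ord_max) =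
  \sum_y propagate n v M y * f y.
Proof.
elim: n f => [|n IH] f.
  rewrite sum_ffun_snoc.
  transitivity (\sum_(u : {ffun 'I_0 -> S}) \sum_y v y * f y).
    apply: eq_bigr => u _; apply: eq_bigr => y _.
    rewrite /path_weight big_ord0 mulr1 ffun_snoc_last.
    by rewrite [X in ffun_snoc u y X](_ : _ = ord_max) ?ffun_snoc_last //; apply/val_inj.
  by rewrite sumr_const card_ffun card_ord expn0 mulr1n.
rewrite sum_ffun_snoc.
transitivity (\sum_(u : {ffun 'I_n.+1 -> S}) path_weight v M u *
               (\sum_y M n (u ord_max) y * f y)).
  apply: eq_bigr => u _; rewrite mulr_sumr; apply: eq_bigr => y _.
  rewrite ffun_snoc_last /path_weight big_ord_recr /= mulrA -!mulrA; congr (_ * _).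
    rewrite -[in LHS](@inord_val n.+1 ord0) ffun_snoc_inord //.
    by congr (v (u _)); apply/val_inj; rewrite /= inordK.
  rewrite !mulrA; congr (_ * _ * _).
  - apply: eq_bigr => i _; rewrite !ffun_snoc_inord //; have := ltn_ord i; lia.
  - rewrite ffun_snoc_inord // ffun_snoc_inord_last; congr (M n (u _) _).
    by apply/val_inj; rewrite /= inordK.
rewrite (IH (fun x => \sum_y M n x y * f y)) /=.
under eq_bigr do rewrite mulr_sumr.
rewrite exchange_big /=; apply: eq_bigr => y _; rewrite mulr_suml.
by apply: eq_bigr => x _; rewrite mulrA.
Qed.

End PathSums.

Section Markov.
Variables (R : realType) (S : finType) (K : S -> S -> R) (pi : S -> R).
Hypothesis K_stoch : stochastic K.
Hypothesis pi_stat : forall y, \sum_x pi x * K x y = pi y.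

Lemma kpow_add s t x y : kpow K (s + t) x y = \sum_z kpow K s x z * kpow K t z y.
Proof.
elim: t y => [|t IH] y.
  rewrite addn0 /= (bigD1 y) //= eqxx mulr1 big1 ?addr0 // => z /negbTE.
  by rewrite eq_sym => ->; rewrite mulr0.
rewrite addnS /=; under eq_bigr do rewrite IH mulr_suml.
rewrite exchange_big /=; apply: eq_bigr => z _; rewrite mulr_sumr.
by apply: eq_bigr => w _; rewrite mulrA.
Qed.

Lemma kpow_ge0 t x y : 0 <= kpow K t x y.
Proof.
elim: t y => [|t IH] y /=; first by case: (x == y).
by apply: sumr_ge0 => z _; rewrite mulr_ge0 //; case: K_stoch.
Qed.

Lemma kpow_sum1 t x : \sum_y kpow K t x y = 1.
Proof.
elim: t => [|t IH] /=.
  by rewrite (bigD1 x) //= eqxx big1 ?addr0 // => z /negbTE; rewrite eq_sym => ->.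
rewrite exchange_big /= -IH; apply: eq_bigr => z _.
by rewrite -mulr_sumr; case: K_stoch => _ ->; rewrite mulr1.
Qed.

Lemma kpow_stationary t y : \sum_x pi x * kpow K t x y = pi y.
Proof.
elim: t y => [|t IH] y /=.
  by rewrite (bigD1 y) //= eqxx mulr1 big1 ?addr0 // => z /negbTE ->; rewrite mulr0.
under eq_bigr do rewrite mulr_sumr.
rewrite exchange_big /= -pi_stat; apply: eq_bigr => z _.
by rewrite -IH mulr_suml; apply: eq_bigr => x _; rewrite mulrA.
Qed.

Section JointLaw.
Variables (A B : {set S}) (i k : nat).
Hypothesis lt_ik : (i < k)%N.

(* Multiplying the weights by the indicators of [B] at time [i] and of [A] at
   time [k] turns the total mass of the chain into [Pr(Z_k \in A, Z_i \in B)]. *)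
Definition obs m (y : S) : R :=
  (if m == k then (y \in A)%:R else 1) * (if m == i then (y \in B)%:R else 1).
Definition obs_init y := pi y * obs 0 y.
Definition obs_kernel m x y := K x y * obs m.+1 y.

Lemma propagate_obs_upto_i m y : (m <= i)%N ->
  propagate m obs_init obs_kernel y = pi y * (if m == i then (y \in B)%:R else 1).
Proof.
elim: m y => [|m IH] y le_mi /=.
  by rewrite /obs_init /obs (ifN_eq _ _ (_ : 0%N != k)) ?mul1r //; lia.
have step x : propagate m obs_init obs_kernel x * obs_kernel m x y = pi x * K x y * obs m.+1 y.
  by rewrite IH 1?ltnW // (ifN_eq _ _ (_ : m != i)) ?mulr1 ?mulrA //; lia.
under eq_bigr do rewrite step.
by rewrite -mulr_suml pi_stat /obs (ifN_eq _ _ (_ : m.+1 != k)) ?mul1r //; lia.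
Qed.

Lemma propagate_obs_from_i d y : (i + d <= k)%N ->
  propagate (i + d) obs_init obs_kernel y =
  (if (i + d)%N == k then (y \in A)%:R else 1) * \sum_(x in B) pi x * kpow K d x y.
Proof.
elim: d y => [|d IH] y le_dk.
  rewrite addn0 propagate_obs_upto_i // eqxx (ifN_eq _ _ (_ : i != k)) ?mul1r; last lia.
  case: (boolP (y \in B)) => yB.
    rewrite mulr1 (bigD1 y) //= eqxx mulr1 big1 ?addr0 // => z /andP [_ /negbTE ->].
    by rewrite mulr0.
  rewrite mulr0 big1 // => z zB /=; case: eqP => [zy|_]; last by rewrite mulr0.
  by move: zB; rewrite zy (negbTE yB).
rewrite addnS /=.
have step x : propagate (i + d) obs_init obs_kernel x * obs_kernel (i + d) x y =
   (\sum_(z in B) pi z * kpow K d z x) * K x y * obs (i + d).+1 y.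
  by rewrite IH ?(ifN_eq _ _ (_ : (i + d)%N != k)) ?mul1r ?mulrA //; lia.
under eq_bigr do rewrite step.
rewrite -mulr_suml mulrC /obs (ifN_eq _ _ (_ : (i + d).+1 != i)) ?mulr1; last lia.
congr (_ * _); under [LHS]eq_bigr do rewrite mulr_suml.
rewrite exchange_big /=; apply: eq_bigr => z _; rewrite mulr_sumr.
by apply: eq_bigr => x _; rewrite mulrA.
Qed.

Lemma sum_propagate_obs_after_k d :
  \sum_y propagate (k + d) obs_init obs_kernel y = \sum_y propagate k obs_init obs_kernel y.
Proof.
elim: d => [|d IH]; first by rewrite addn0.
rewrite addnS /= exchange_big /= -IH; apply: eq_bigr => x _.
rewrite -mulr_sumr -[RHS]mulr1 -(proj2 K_stoch x); congr (_ * _).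
by apply: eq_bigr => y _; rewrite /obs_kernel /obs !ifN_eq ?mulr1 //; lia.
Qed.

Lemma path_weight_obs N (w : {ffun 'I_N.+1 -> S}) :
  path_weight obs_init obs_kernel w = path_prob K pi w * \prod_(j < N.+1) obs j (w j).
Proof.
have -> : \prod_(j < N.+1) obs j (w j) = obs 0 (w ord0) * \prod_(j < N) obs j.+1 (w (inord j.+1)).
  rewrite big_ord_recl; congr (_ * _); apply: eq_bigr => j _.
  have -> : lift ord0 j = inord j.+1.
    by apply/val_inj; rewrite /= inordK /bump; have := ltn_ord j; lia.
  by rewrite inordK //; have := ltn_ord j; lia.
rewrite /path_weight /obs_init /obs_kernel /path_prob big_split /=.
set a := pi _; set b := obs 0 _; set P := \prod_(j < N) K _ _.
set P' := \prod_(j < N) obs _ _; ring.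
Qed.

Lemma Pr_ev_joint N (ii kk : 'I_N.+1) : val ii = i -> val kk = k ->
  Pr K pi (ev kk A :&: ev ii B) = \sum_(x in B) pi x * \sum_(y in A) kpow K (k - i)%N x y.
Proof.
move=> def_i def_k.
have kN : (k <= N)%N by rewrite -def_k -ltnS ltn_ord.
have prod_obs1 (c : S -> R) (w : {ffun 'I_N.+1 -> S}) (j0 : 'I_N.+1) :
    \prod_(j < N.+1) (if val j == val j0 then c (w j) else 1) = c (w j0).
  by rewrite -big_mkcond /= (big_pred1 j0) // => j; rewrite val_eqE.
transitivity (\sum_(w : {ffun 'I_N.+1 -> S}) path_weight obs_init obs_kernel w * 1).
  rewrite /Pr big_mkcond; apply: eq_bigr => w _.
  rewrite mulr1 path_weight_obs /obs big_split /= -{1}def_k -{1}def_i.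
  rewrite (prod_obs1 (fun y => (y \in A)%:R)) (prod_obs1 (fun y => (y \in B)%:R)) !inE.
  by case: (w kk \in A); case: (w ii \in B); rewrite /= ?mulr1 ?mulr0.
rewrite (sum_path_weight N obs_init obs_kernel (fun _ => 1)).
under eq_bigr do rewrite mulr1.
rewrite -(subnKC kN) sum_propagate_obs_after_k -{1}(subnKC (ltnW lt_ik)).
under eq_bigr do rewrite propagate_obs_from_i ?subnKC ?(ltnW lt_ik) // eqxx.
under [RHS]eq_bigr do rewrite mulr_sumr.
rewrite [RHS]exchange_big /= [RHS]big_mkcond /=; apply: eq_bigr => y _.
by case: (y \in A); rewrite ?mul1r ?mul0r.
Qed.

End JointLaw.
End Markov.

Lemma ler_term_sum (R : numDomainType) (I : finType) (P : pred I) (F : I -> R) j :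
  (forall i, P i -> 0 <= F i) -> P j -> F j <= \sum_(i | P i) F i.
Proof.
move=> F_ge0 Pj; rewrite (bigD1 j) //= lerDl sumr_ge0 // => i /andP [Pi _].
exact: F_ge0.
Qed.

Section Mixing.
Variables (R : realType) (S : finType) (K : S -> S -> R) (pi : S -> R).
Hypothesis K_stoch : stochastic K.
Hypothesis pi_stat : forall y, \sum_x pi x * K x y = pi y.
Hypothesis pi_ge0 : forall x, 0 <= pi x.
Hypothesis pi_sum1 : \sum_x pi x = 1.

Definition kpow_set t x (A : {set S}) := \sum_(y in A) kpow K t x y.

Lemma kpow_set_add s t x A : kpow_set (s + t) x A = \sum_z kpow K s x z * kpow_set t z A.
Proof.
rewrite /kpow_set; under eq_bigr do rewrite kpow_add.
by rewrite exchange_big /=; apply: eq_bigr => z _; rewrite mulr_sumr.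
Qed.

Definition osc_le t c := forall x x' A, kpow_set t x A - kpow_set t x' A <= c.

Lemma osc_le1 t : osc_le t 1.
Proof.
have kset_ge0 x A : 0 <= kpow_set t x A.
  by apply: sumr_ge0 => y _; apply: kpow_ge0.
have kset_le1 x A : kpow_set t x A <= 1.
  rewrite -(kpow_sum1 K_stoch t x) /kpow_set big_mkcond /=; apply: ler_sum => y _.
  by case: (y \in A) => //; apply: kpow_ge0.
by move=> x x' A; have := kset_le1 x A; have := kset_ge0 x' A; lra.
Qed.

(* [K^s(x, .) - K^s(x', .)] has total mass 0 and positive part of mass at most
   [a]; integrating it against [K^t(., A)], whose oscillation is at most [b],
   gives at most [a * b]. *)
Lemma osc_leD s t a b : osc_le s a -> osc_le t b -> osc_le (s + t) (a * b).
Proof.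
move=> osc_s osc_t x x' A.
set g := fun z => kpow_set t z A.
set mu := fun z => kpow K s x z - kpow K s x' z.
have -> : kpow_set (s + t) x A - kpow_set (s + t) x' A = \sum_z mu z * g z.
  by rewrite !kpow_set_add -sumrB; apply: eq_bigr => z _; rewrite mulrBl.
have mu_sum0 : \sum_z mu z = 0 by rewrite sumrB !(kpow_sum1 K_stoch) subrr.
have [zM _ g_le] := arg_maxP g (i0 := x) (P := predT) isT.
have [zm _ g_ge] := arg_minP g (i0 := x) (P := predT) isT.
set P := [set z | 0 < mu z].
have mu_neg : \sum_(z | z \notin P) mu z = - \sum_(z in P) mu z.
  by move: mu_sum0; rewrite (bigID (mem P)) /= => mu_sum0; apply/eqP; rewrite -addr_eq0 addrC mu_sum0.
have mu_pos_ge0 : 0 <= \sum_(z in P) mu z.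
  by apply: sumr_ge0 => z; rewrite inE => /ltW.
have mu_pos_le : \sum_(z in P) mu z <= a by have := osc_s x x' P; rewrite -sumrB.
have sum_P : \sum_(z in P) mu z * g z <= (\sum_(z in P) mu z) * g zM.
  rewrite mulr_suml; apply: ler_sum => z; rewrite inE => /ltW mu_ge0.
  by apply: ler_wpM2l => //; apply: g_le.
have sum_nP : \sum_(z | z \notin P) mu z * g z <= (\sum_(z | z \notin P) mu z) * g zm.
  rewrite mulr_suml; apply: ler_sum => z; rewrite !inE -leNgt => mu_le0.
  by apply: ler_wnM2l => //; apply: g_ge.
have osc_g_ge0 : 0 <= g zM - g zm by rewrite subr_ge0; apply: g_ge.
rewrite (bigID (mem P)) /=; apply: le_trans (lerD sum_P sum_nP) _.
rewrite mu_neg mulNr -mulrBr; exact: ler_pM mu_pos_ge0 osc_g_ge0 mu_pos_le (osc_t _ _ _).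
Qed.

Lemma osc_le_mul t h l : osc_le t h -> osc_le (l * t) (h ^+ l).
Proof.
move=> osc_t; elim: l => [|l IH]; first by rewrite mul0n expr0; apply: osc_le1.
by rewrite mulSn exprS; apply: osc_leD.
Qed.

Lemma osc_le_dist t : dist K pi t <= 4^-1 -> osc_le t 2^-1.
Proof.
move=> dist_t x x' A.
have near_pi z : `|kpow_set t z A - \sum_(y in A) pi y| <= 4^-1.
  apply: le_trans dist_t; apply: le_trans (le_bigmax _ _ z).
  exact: (le_bigmax _ (fun B : {set S} => `|\sum_(y in B) kpow K t z y - \sum_(y in B) pi y|) A).
have := near_pi x; have := near_pi x'; rewrite !ler_norml => /andP [? ?] /andP [? ?].
lra.
Qed.

Lemma osc_le_stationary j c x A : osc_le j c -> `|kpow_set j x A - \sum_(y in A) pi y| <= c.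
Proof.
move=> osc_j.
have -> : \sum_(y in A) pi y = \sum_x' pi x' * kpow_set j x' A.
  rewrite /kpow_set; under [RHS]eq_bigr do rewrite mulr_sumr.
  by rewrite exchange_big /=; apply: eq_bigr => y _; rewrite kpow_stationary.
have -> : kpow_set j x A = \sum_x' pi x' * kpow_set j x A by rewrite -mulr_suml pi_sum1 mul1r.
rewrite -sumrB ler_norml -[c]mul1r -pi_sum1 mulr_suml -sumrN; apply/andP; split.
  apply: ler_sum => x' _; rewrite -mulrBr -mulrN; apply: ler_wpM2l => //.
  by rewrite lerNl opprB; exact: osc_j.
by apply: ler_sum => x' _; rewrite -mulrBr; apply: ler_wpM2l.
Qed.

Lemma psi_le_quarter N (ii kk : 'I_N.+1) j e :
  (0 < j)%N -> val kk = (val ii + j)%N -> osc_le j e -> e <= 4^-1 * pi_min pi ->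
  psi K pi kk ii <= 4^-1.
Proof.
move=> j_gt0 def_k osc_j e_le.
have lt_ik : (val ii < val kk)%N by rewrite def_k; lia.
have def_j : (val kk - val ii)%N = j by rewrite def_k addKn.
have Pr_joint := Pr_ev_joint K_stoch pi_stat _ _ lt_ik (erefl _) (erefl _).
have Pr_kk A : Pr K pi (ev kk A) = \sum_(y in A) pi y.
  have -> : ev kk A = ev kk A :&: ev ii setT by apply/setP => w; rewrite !inE andbT.
  rewrite Pr_joint; under eq_bigl do rewrite in_setT.
  under eq_bigr do rewrite mulr_sumr.
  by rewrite exchange_big /=; apply: eq_bigr => y _; rewrite kpow_stationary.
have Pr_ii B : Pr K pi (ev ii B) = \sum_(x in B) pi x.
  have -> : ev ii B = ev kk setT :&: ev ii B by apply/setP => w; rewrite !inE.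
  rewrite Pr_joint; apply: eq_bigr => x _.
  by under eq_bigl do rewrite in_setT; rewrite kpow_sum1 // mulr1.
have quarter_ge0 : (0 : R) <= 4^-1 by rewrite invr_ge0.
apply: bigmax_le => // A _; apply: bigmax_le => // B /andP [].
rewrite Pr_joint !Pr_kk !Pr_ii def_j => pA_gt0 pB_gt0.
set pA := \sum_(y in A) pi y; set pB := \sum_(x in B) pi x.
have -> : \sum_(x in B) pi x * \sum_(y in A) kpow K j x y - pA * pB =
          \sum_(x in B) pi x * (kpow_set j x A - pA).
  by rewrite /pB mulr_sumr -sumrB; apply: eq_bigr => x _; rewrite mulrBr [pA * _]mulrC.
(* [psi] elaborates its norm at a non-canonical instance; restate it. *)
match goal with |- is_true (Order.le (Num.norm ?z) ?c) => change (`|z| <= c) end.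
have pApB_gt0 : 0 < pA * pB by rewrite mulr_gt0.
rewrite normrM normfV (gtr0_norm pApB_gt0) ler_pdivrMr //.
have cov_le : `|\sum_(x in B) pi x * (kpow_set j x A - pA)| <= pB * e.
  apply: le_trans (ler_norm_sum _ _ _) _; rewrite /pB mulr_suml.
  apply: ler_sum => x _; rewrite normrM ger0_norm //; apply: ler_wpM2l => //.
  exact: osc_le_stationary.
have [A0|[a aA]] := set_0Vmem A.
  by move: pA_gt0; rewrite /pA A0 big_set0 ltxx.
have e_le_pA : e <= 4^-1 * pA.
  apply: (le_trans e_le); apply: ler_wpM2l => //.
  apply: (@le_trans _ _ (pi a)); first exact: bigmin_le.
  exact: ler_term_sum.
apply: le_trans cov_le _; rewrite mulrA (mulrC _ pB); apply: ler_wpM2l => //.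
exact: ltW.
Qed.

Lemma Psi_le N j e : (0 < j)%N -> osc_le j e -> e <= 4^-1 * pi_min pi -> (Psi K pi N <= j)%N.
Proof.
move=> j_gt0 osc_j e_le; rewrite /Psi; case: ex_minnP => p _; apply.
rewrite /Psi_ok j_gt0; apply/forallP => ii; apply/forallP => kk; apply/implyP => /eqP def_k.
exact: psi_le_quarter def_k osc_j e_le.
Qed.

End Mixing.

Lemma stationary_irreducible_gt0 (R : realType) (S : finType) (K : S -> S -> R) (pi : S -> R) :
  stochastic K -> stationary_dist K pi -> irreducible K -> forall y, 0 < pi y.
Proof.
move=> K_stoch [[pi_ge0 pi_sum1] pi_stat] K_irr y.
have [x0 pi_x0] : exists x0, 0 < pi x0.
  apply/existsP; apply: contraT => /existsPn pi_le0.
  have : \sum_x pi x = 0.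
    by apply: big1 => x _; apply/eqP; rewrite eq_le pi_ge0 andbT leNgt pi_le0.
  by rewrite pi_sum1 => /eqP; rewrite oner_eq0.
have [s Ks_pos] := K_irr x0 y.
rewrite -(kpow_stationary pi_stat s y).
apply: lt_le_trans (_ : 0 < pi x0 * kpow K s x0 y) _; first exact: mulr_gt0.
by apply: (ler_term_sum (P := xpredT)) => // x _; rewrite mulr_ge0 // kpow_ge0.
Qed.

Lemma pi_min_gt0 (R : realType) (S : finType) (pi : S -> R) :
  (forall x, 0 < pi x) -> 0 < pi_min pi.
Proof.
by move=> pi_gt0; apply: (big_ind (fun x => 0 < x)) => // x y x_gt0 y_gt0; rewrite lt_min x_gt0.
Qed.

Lemma pi_min_le1 (R : realType) (S : finType) (pi : S -> R) : pi_min pi <= 1.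
Proof. exact: bigmin_le_id. Qed.

(* [l] is the least exponent with [2^l >= 4 / m]. *)
Lemma halving_exponent (R : realType) (m : R) : 0 < m -> m <= 1 ->
  exists l, [/\ (0 < l)%N, 2^-1 ^+ l <= 4^-1 * m & l%:R <= ln m^-1 / ln 2 + 3].
Proof.
move=> m_gt0 m_le1.
have ex_l : exists l, 4 / m <= 2 ^+ l.
  exists (Num.Def.archi_bound (4 / m)).
  apply: le_trans (ltW (archi_boundP _)) _; first by rewrite divr_ge0 // ltW.
  by rewrite -natrX ler_nat ltnW // ltn_expl.
have [[|l] le_l l_min] := ex_minnP ex_l.
  have : 4 <= 4 / m by rewrite ler_pdivlMr // ler_piMr.
  by move: le_l; rewrite expr0; lra.
have two_gt0 n : 0 < (2 : R) ^+ n by rewrite exprn_gt0.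
exists l.+1; split => //.
  rewrite exprVn -(ler_pM2r (two_gt0 l.+1)) mulVf ?gt_eqF //.
  by move: le_l; rewrite ler_pdivrMr // => le_l; lra.
have lt_l : (2 : R) ^+ l < 4 / m by rewrite ltNge; apply/negP => /l_min; lia.
have ln2_gt0 : 0 < ln (2 : R) by apply: ln_gt0; lra.
have ln_lt : ln (2 : R) *+ l < ln (2 : R) *+ 2 + ln m^-1.
  have pos2 n : (2 : R) ^+ n \is Num.pos by rewrite posrE.
  rewrite -!lnXn ?ltr0n // -lnM ?pos2 ?posrE ?invr_gt0 //.
  rewrite ltr_ln ?pos2 ?posrE ?divr_gt0 // -[2 ^+ 2]/(2 * 2 : R).
  by move: lt_l; rewrite (_ : (2 * 2 : R) = 4) //; lra.
rewrite -(ler_pM2r ln2_gt0) mulrDl divfK ?gt_eqF // -addn1 natrD mulrDl mul1r.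
move: ln_lt; rewrite -[ln 2 *+ l]mulr_natr -[ln 2 *+ 2]mulr_natr (mulrC l%:R).
set a := ln 2 * l%:R; lra.
Qed.

Theorem propositionB (R : realType) (S : finType) (K : S -> S -> R) (pi : S -> R)
    (N t : nat) :
  stochastic K -> stationary_dist K pi -> ergodic K ->
  is_tmix K pi t ->
  (Psi K pi N)%:R <= (ln (pi_min pi)^-1 / ln 2 + 3) * t%:R.
Proof.
move=> K_stoch pi_stat_dist [K_irr _] [t_gt0 [dist_t _]].
have [[pi_ge0 pi_sum1] pi_stat] := pi_stat_dist.
have pi_gt0 := stationary_irreducible_gt0 K_stoch pi_stat_dist K_irr.
have [l [l_gt0 half_l ln_l]] := halving_exponent (pi_min_gt0 pi_gt0) (pi_min_le1 pi).
have osc_lt : osc_le K (l * t) (2^-1 ^+ l).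
  by apply: osc_le_mul => //; apply: osc_le_dist dist_t.
have Psi_le_lt : (Psi K pi N <= l * t)%N.
  by apply: (Psi_le K_stoch pi_stat pi_ge0 pi_sum1 N _ osc_lt half_l); rewrite muln_gt0 l_gt0.
apply: le_trans (_ : (l * t)%:R <= _); first by rewrite ler_nat.
by rewrite natrM ler_wpM2r.
Qed.
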